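(* Let $\mathcal{G}^2_6$ be the $3$-graph on $[6]$ whose edges are all $3$-subsets of $[6]$ except $\{1,2,3\},\{1,2,6\},\{3,4,5\},\{4,5,6\}$. Then $\lambda(\mathcal{G}^2_6)\le 2/27$.
   Context: For a $3$-graph $\mathcal{T}$ on $[s]$, $p_{\mathcal{T}}(x)=\sum_{E\in\mathcal{T}}\prod_{i\in E}x_i$ and the Lagrangian is $\lambda(\mathcal{T})=\max\{p_{\mathcal{T}}(x): x\in\mathbb{R}^s,\ x_i\ge0,\ \sum_i x_i=1\}$. *)

From mathcomp Require Import all_boot all_order all_algebra.
Set Implicit Arguments. Unset Strict Implicit. Unset Printing Implicit Defensive.
Import Order.TTheory GRing.Theory Num.Theory.
Local Open Scope ring_scope.

(* Vertices [s] = {1,...,s} are represented by 'I_s = {0,...,s-1};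
   vertex k of the paper is the ordinal k-1. *)

Definition is_3graph (s : nat) (T : {set {set 'I_s}}) : bool :=
  [forall E in T, #|E| == 3%N].

Definition lagr_poly (R : numDomainType) (s : nat) (T : {set {set 'I_s}})
    (x : 'I_s -> R) : R :=
  \sum_(E in T) \prod_(i in E) x i.

Definition in_simplex (R : numDomainType) (s : nat) (x : 'I_s -> R) : Prop :=
  (forall i, 0 <= x i) /\ \sum_(i < s) x i = 1.

(* "lambda(T) <= c": the maximum of p_T over the simplex is at most c,
   i.e. every value of p_T on the simplex is at most c. *)
Definition lagrangian_le (R : numDomainType) (s : nat) (T : {set {set 'I_s}})
    (c : R) : Prop :=
  forall x : 'I_s -> R, in_simplex x -> lagr_poly T x <= c.

Definition v6 (k : nat) : 'I_6 := inord k.-1.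

Definition G26 : {set {set 'I_6}} :=
  [set E : {set 'I_6} | (#|E| == 3%N)
     && (E != [set v6 1; v6 2; v6 3])
     && (E != [set v6 1; v6 2; v6 6])
     && (E != [set v6 3; v6 4; v6 5])
     && (E != [set v6 4; v6 5; v6 6])].

(* Group the vertices into the pairs {1,2}, {4,5}, {3,6}, with sums a, b, c and
   products pa, pb, pc.  The four non-edges are {1,2} or {4,5} together with a
   vertex of {3,6}, so p = abc + b pa + a pb + (a + b) pc.  The AM-GM bounds
   pa <= a^2/4, pb <= b^2/4, pc <= c^2/4 and ab <= (a + b)^2/4 reduce this to a
   cubic in u = a + b = 1 - c, whose maximum 2/27 is attained at u = 2/3. *)

From mathcomp Require Import all_boot all_order all_algebra.
From mathcomp Require Import ring lra.
Import Order.TTheory GRing.Theory Num.Theory.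
Local Open Scope ring_scope.

Section ThreeSubsets.

Variable n : nat.
Implicit Types (a b c : 'I_n) (E : {set 'I_n}).

Lemma sorted_enum_set E : sorted (fun i j : 'I_n => i < j)%N (enum E).
Proof.
rewrite /enum_mem -enumT; apply: sorted_filter; first exact: ltn_trans.
by have := iota_ltn_sorted 0 n; rewrite -val_enum_ord sorted_map.
Qed.

Lemma enum_set3 {a b c} : (a < b < c)%N -> enum [set a; b; c] = [:: a; b; c].
Proof.
case/andP=> ab bc; apply: (irr_sorted_eq (leT := fun i j : 'I_n => i < j)%N).
- exact: ltn_trans.
- by move=> i; rewrite /= ltnn.
- exact: sorted_enum_set.
- by rewrite /= ab bc.
- by move=> i; rewrite mem_enum !inE orbA.
Qed.

Lemma card_set3 {a b c} : (a < b < c)%N -> #|[set a; b; c]| = 3%N.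
Proof. by move/enum_set3; rewrite cardE => ->. Qed.

Lemma eq_set3 {a b c a' b' c'} : (a < b < c)%N -> (a' < b' < c')%N ->
  ([set a; b; c] == [set a'; b'; c']) = ((a, b, c) == (a', b', c')).
Proof.
move=> abc abc'; apply/eqP/eqP => [E3 | [-> -> ->]] //.
by have := enum_set3 abc; rewrite E3 enum_set3 // => -[-> -> ->].
Qed.

Lemma set3_of_card3 E : #|E| = 3%N ->
  exists a b c, (a < b < c)%N /\ E = [set a; b; c].
Proof.
rewrite cardE; have := sorted_enum_set E.
case eE: (enum E) => [|a [|b [|c []]]] //= /and3P[ab bc _] _.
exists a, b, c; split; first by rewrite ab.
by rewrite -[E]set_enum eE; apply/setP => i; rewrite !inE orbA.
Qed.

Lemma sum_card3 (R : nmodType) (F : {set 'I_n} -> R) :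
  \sum_(E : {set 'I_n} | #|E| == 3%N) F E =
  \sum_(a < n) \sum_(b < n | (a < b)%N) \sum_(c < n | (b < c)%N) F [set a; b; c].
Proof.
rewrite pair_big_dep pair_big_dep /=.
pose set3 (t : 'I_n * 'I_n * 'I_n) := [set t.1.1; t.1.2; t.2].
pose incr := [set t : 'I_n * 'I_n * 'I_n | (t.1.1 < t.1.2 < t.2)%N].
have set3_inj : {in incr &, injective set3}.
  move=> [[a b] c] [[a' b'] c']; rewrite !inE => abc abc' /eqP.
  by rewrite eq_set3 // => /eqP.
have card3E : [set E : {set 'I_n} | #|E| == 3%N] = set3 @: incr.
  apply/setP => E; rewrite inE; apply/eqP/imsetP => [/set3_of_card3 | [t]].
    by case=> a [b [c [abc ->]]]; exists (a, b, c); rewrite ?inE.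
  by rewrite inE => abc ->; apply: card_set3.
rewrite (eq_bigl [in set3 @: incr]) => [|E]; last by rewrite -card3E inE.
by rewrite big_imset //; apply: eq_bigl => t; rewrite inE.
Qed.

End ThreeSubsets.

Lemma lagr_poly_3graph (R : numDomainType) n (T : {set {set 'I_n}}) (x : 'I_n -> R) :
  is_3graph T ->
  lagr_poly T x = \sum_(a < n) \sum_(b < n | (a < b)%N)
                    \sum_(c < n | (b < c)%N && ([set a; b; c] \in T)) x a * x b * x c.
Proof.
move=> /forall_inP T3.
have -> : lagr_poly T x =
    \sum_(E : {set 'I_n} | #|E| == 3%N) if E \in T then \prod_(i in E) x i else 0.
  rewrite /lagr_poly big_mkcond [RHS]big_mkcond; apply: eq_bigr => E _.
  have [ET | _] := boolP (E \in T); last by rewrite if_same.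
  by rewrite (T3 E ET).
rewrite sum_card3; apply: eq_bigr => a _; apply: eq_bigr => b ab.
rewrite big_mkcondr; apply: eq_bigr => c bc.
by rewrite -big_enum enum_set3 ?ab // !big_cons big_nil /= mulr1 mulrA.
Qed.

Lemma v6E k : (0 < k <= 6)%N -> val (v6 k) = k.-1.
Proof. by case: k => // k /= k6; rewrite inordK. Qed.

Lemma is_3graph_G26 : is_3graph G26.
Proof. by apply/forall_inP => E; rewrite inE => /andP[/andP[/andP[/andP[]]]]. Qed.

Definition non_edges26 : seq (nat * nat * nat) :=
  [:: (0, 1, 2); (0, 1, 5); (2, 3, 4); (3, 4, 5)]%N.

Lemma mem_G26 (a b c : 'I_6) : (a < b < c)%N ->
  ([set a; b; c] \in G26) = ((val a, val b, val c) \notin non_edges26).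
Proof.
move=> abc; rewrite inE card_set3 // !eq_set3 //; try by rewrite !v6E.
by rewrite !xpair_eqE -!val_eqE /= !v6E // !inE !xpair_eqE !negb_or !andbA.
Qed.

Lemma lagr_poly_G26 (R : numDomainType) (x : 'I_6 -> R) :
  lagr_poly G26 x =
    (x (v6 1) + x (v6 2)) * (x (v6 4) + x (v6 5)) * (x (v6 3) + x (v6 6))
    + (x (v6 4) + x (v6 5)) * (x (v6 1) * x (v6 2))
    + (x (v6 1) + x (v6 2)) * (x (v6 4) * x (v6 5))
    + (x (v6 1) + x (v6 2) + (x (v6 4) + x (v6 5))) * (x (v6 3) * x (v6 6)).
Proof.
(* Sums over nat ranges evaluate by computation, sums over ['I_6] do not. *)
pose y k := x (inord k).
rewrite lagr_poly_3graph ?is_3graph_G26 //.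
transitivity (\sum_(0 <= a < 6) \sum_(0 <= b < 6 | (a < b)%N)
  \sum_(0 <= c < 6 | (b < c)%N && ((a, b, c) \notin non_edges26)) y a * y b * y c).
  rewrite big_mkord; apply: eq_bigr => a _; rewrite big_mkord; apply: eq_bigr => b ab.
  rewrite big_mkord; apply: eq_big => [c | c _]; last by rewrite /y !inord_val.
  by case: (ltnP b c) => bc //=; rewrite mem_G26 ?ab.
by rewrite unlock /y /v6 /=; ring.
Qed.

Lemma sum_I6 (R : nmodType) (F : 'I_6 -> R) :
  \sum_(i < 6) F i = F (v6 1) + F (v6 2) + F (v6 3) + F (v6 4) + F (v6 5) + F (v6 6).
Proof.
rewrite (eq_bigr (fun i : 'I_6 => F (inord i))) => [|i _]; last by rewrite inord_val.
by rewrite -(big_mkord xpredT (fun i => F (inord i))) unlock /v6 /= addr0 !addrA.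
Qed.

Lemma three_pairs_le (R : realFieldType) (a b c pa pb pc : R) :
  0 <= a -> 0 <= b -> 0 <= c -> a + b + c = 1 ->
  pa <= (a / 2) ^+ 2 -> pb <= (b / 2) ^+ 2 -> pc <= (c / 2) ^+ 2 ->
  a * b * c + b * pa + a * pb + (a + b) * pc <= 2 / 27.
Proof.
move=> a_ge0 b_ge0 c_ge0 abc1 pa_le pb_le pc_le.
have ab_ge0 : 0 <= a + b by rewrite addr_ge0.
have pa_bound := ler_wpM2l b_ge0 pa_le.
have pb_bound := ler_wpM2l a_ge0 pb_le.
have pc_bound := ler_wpM2l ab_ge0 pc_le.
have ab_bound : a * b * (c + (a + b) / 4) <= ((a + b) / 2) ^+ 2 * (c + (a + b) / 4).
  by apply: ler_wpM2r; [lra | exact: (leif_AGM2 a b).1].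
have c_def : c = 1 - (a + b) by lra.
subst c.
(* 2/27 - ((u/2)^2 (1 - u + u/4) + u ((1 - u)/2)^2) = (3u - 2)^2 (8 - 3u) / 432, with u = a + b *)
have : 0 <= (3 * (a + b) - 2) ^+ 2 * (8 - 3 * (a + b)).
  by rewrite mulr_ge0 ?sqr_ge0 //; lra.
lra.
Qed.

Theorem lemma4p2 (R : realFieldType) :
  lagrangian_le (R:=R) G26 (2 / 27).
Proof.
move=> x [x_ge0]; rewrite sum_I6 => x_sum1; rewrite lagr_poly_G26.
apply: three_pairs_le; rewrite ?addr_ge0 //; try exact: (leif_AGM2 _ _).1.
by rewrite -x_sum1; ring.
Qed.
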